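(* Let $\mathfrak v_r$ be a $C(r)$-module and let $\mathfrak v_m$ be a $C(m)$-module with $m\equiv 0\pmod 4$ (both with compatible inner products). Then $\mathfrak v_m\otimes\mathfrak v_r$ is a $C(m+r)$-module with Clifford action $$J_{(z,w)}=J_z\otimes \mathrm{Id}+K_m\otimes J_w,\qquad (z,w)\in\mathbb R^m\times\mathbb R^r=\mathbb R^{m+r},$$ and the corresponding Lie algebra of Heisenberg type $(\mathfrak v_m\otimes\mathfrak v_r)\oplus(\mathbb R^m\times\mathbb R^r)$ has bracket $$[x\otimes u,\,y\otimes v]=\big(\langle u,v\rangle[x,y],\ \langle K_mx,y\rangle[u,v]\big),\qquad x,y\in\mathfrak v_m,\ u,v\in\mathfrak v_r .$$
   Context: $C(k)$ is the real Clifford algebra of $\mathbb R^k$ with relations $z^2=-\langle z,z\rangle 1$; a $C(k)$-module $\mathfrak w$ comes with an inner product for which each $J_z$ ($z\in\mathbb R^k$, acting on $\mathfrak w$) is skew-symmetric. The associated Lie algebra of Heisenberg type is $\mathfrak w\oplus\mathbb R^k$ with $\mathbb R^k$ central and bracket on $\mathfrak w$ given by $\langle z,[u,v]\rangle=\langle J_zu,v\rangle$. For a fixed orthonormal basis $z_1,\dots,z_m$ of $\mathbb R^m$, $K_m=J_{z_1}\cdots J_{z_m}$. The inner product on $\mathfrak v_m\otimes\mathfrak v_r$ is the tensor product inner product. *)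

From mathcomp Require Import all_boot all_order all_algebra.
From mathcomp Require Export mxtens.
Set Implicit Arguments. Unset Strict Implicit. Unset Printing Implicit Defensive.
Import Order.TTheory GRing.Theory Num.Theory.
Local Open Scope ring_scope.

(* A finite-dimensional real inner-product space is modelled as R^n (column
   vectors 'cV_n) with inner product <x,y>_G = x^T G y for a Gram matrix G. *)
Definition ip {R : realFieldType} {n : nat} (G : 'M[R]_n) (x y : 'cV[R]_n) : R :=
  (x^T *m G *m y) 0 0.

Definition is_inner_product {R : realFieldType} {n : nat} (G : 'M[R]_n) : Prop :=
  G^T = G /\ forall x : 'cV[R]_n, x != 0 -> 0 < ip G x x.

(* Standard inner product on R^k (row vectors 'rV_k); the delta vectors
   delta_mx 0 i form the fixed orthonormal basis z_1,...,z_k. *)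
Definition stdip {R : realFieldType} {k : nat} (z w : 'rV[R]_k) : R :=
  (z *m w^T) 0 0.

Definition is_Cmodule {R : realFieldType} {k n : nat}
    (G : 'M[R]_n) (J : 'rV[R]_k -> 'M[R]_n) : Prop :=
  [/\ is_inner_product G,
      (forall (a : R) (z w : 'rV[R]_k), J (a *: z + w) = a *: J z + J w),
      (forall z, J z *m J z = - stdip z z *: 1%:M) &
      (forall z (x y : 'cV[R]_n), ip G (J z *m x) y = - ip G x (J z *m y))].

Definition Kprod {R : realFieldType} {m n : nat} (J : 'rV[R]_m -> 'M[R]_n) : 'M[R]_n :=
  \big[mulmx/1%:M]_(i < m) J (delta_mx 0 i).

(* Bracket of the Heisenberg-type Lie algebra on v = R^n: the vector [x,y] in R^k
   with <z,[x,y]> = <J_z x, y>; its i-th coordinate is <J_{z_i} x, y>. *)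
Definition bracket {R : realFieldType} {k n : nat} (G : 'M[R]_n)
    (J : 'rV[R]_k -> 'M[R]_n) (x y : 'cV[R]_n) : 'rV[R]_k :=
  \row_i ip G (J (delta_mx 0 i) *m x) y.

(* Clifford action on v_m (x) v_r: J_(z,w) = J_z (x) Id + K_m (x) J_w, where
   R^m x R^r = R^(m+r) via row_mx z w (so z = lsubmx, w = rsubmx). *)
Definition tens_action {R : realFieldType} {m r nm nr : nat}
    (Jm : 'rV[R]_m -> 'M[R]_nm) (Jr : 'rV[R]_r -> 'M[R]_nr)
    (zw : 'rV[R]_(m + r)) : 'M[R]_(nm * nr) :=
  Jm (lsubmx zw) *t (1%:M : 'M[R]_nr) + Kprod Jm *t Jr (rsubmx zw).

(* Since the J_{z_i} anticommute
   and square to -1, moving a factor across the ordered product K costs a sign: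
   K^2 = (-1)^(m(m+1)/2) and, each J_{z_i} being skew, K is self-adjoint up to the
   same sign; both signs are +1 when 4 | m, and J_z anticommutes with K when m is
   even.  Hence J_(z,w)^2 = J_z^2 (x) 1 + (J_z K + K J_z) (x) J_w + K^2 (x) J_w^2
   = -(|z|^2 + |w|^2), and skewness is checked factorwise.  The tensor product of
   inner products is positive definite because symmetric Gaussian elimination
   turns each factor into a positive diagonal matrix by a congruence.  The bracket
   is read off coordinatewise from <A (x) B (x (x) u), y (x) v> = <A x, y><B u, v>. *)

From HB Require Import structures.
From mathcomp Require Import all_boot all_order all_algebra.
From mathcomp Require Import mxtens ring zify.
Set Implicit Arguments.
Unset Strict Implicit.
Unset Printing Implicit Defensive.

Import Order.TTheory GRing.Theory Num.Theory.
Local Open Scope ring_scope.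

Section TensorAlgebra.
Variable R : pzRingType.

Lemma tensmxDl m n p q (A B : 'M[R]_(m, n)) (C : 'M[R]_(p, q)) :
  (A + B) *t C = A *t C + B *t C.
Proof. by apply/matrixP=> i j; rewrite !mxE mulrDl. Qed.

Lemma tensmxDr m n p q (A : 'M[R]_(m, n)) (B C : 'M[R]_(p, q)) :
  A *t (B + C) = A *t B + A *t C.
Proof. by apply/matrixP=> i j; rewrite !mxE mulrDr. Qed.

Lemma tensmxNl m n p q (A : 'M[R]_(m, n)) (C : 'M[R]_(p, q)) :
  (- A) *t C = - (A *t C).
Proof. by apply/matrixP=> i j; rewrite !mxE mulNr. Qed.

Lemma tensmxNr m n p q (A : 'M[R]_(m, n)) (C : 'M[R]_(p, q)) :
  A *t (- C) = - (A *t C).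
Proof. by apply/matrixP=> i j; rewrite !mxE mulrN. Qed.

Lemma tensmxZl m n p q (a : R) (A : 'M[R]_(m, n)) (C : 'M[R]_(p, q)) :
  (a *: A) *t C = a *: (A *t C).
Proof. by apply/matrixP=> i j; rewrite !mxE mulrA. Qed.

Lemma tensmx11 m n : (1%:M : 'M[R]_m) *t (1%:M : 'M[R]_n) = 1%:M.
Proof.
apply/matrixP=> i j.
case: (mxtens_indexP i) => i1 i2; case: (mxtens_indexP j) => j1 j2.
rewrite tensmxE !mxE (inj_eq (can_inj (@mxtens_indexK m n))) xpair_eqE.
by case: (i1 == j1); case: (i2 == j2); rewrite ?mulr1 ?mulr0 ?mul0r.
Qed.

End TensorAlgebra.

Lemma tensmxZr (R : comPzRingType) m n p q (a : R) (A : 'M[R]_(m, n))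
    (C : 'M[R]_(p, q)) :
  A *t (a *: C) = a *: (A *t C).
Proof. by apply/matrixP=> i j; rewrite !mxE mulrCA. Qed.

Section InnerProduct.
Variable R : realFieldType.

Lemma ip_delta n (G : 'M[R]_n) i j : ip G (delta_mx i 0) (delta_mx j 0) = G i j.
Proof. by rewrite /ip trmx_delta -rowE -colE !mxE. Qed.

Lemma eq_ip_mx n (A B : 'M[R]_n) : (forall x y, ip A x y = ip B x y) -> A = B.
Proof. by move=> eqAB; apply/matrixP=> i j; rewrite -!ip_delta eqAB. Qed.

Lemma ip_mulmx n (G P : 'M[R]_n) x y :
  ip G (P *m x) (P *m y) = ip (P^T *m G *m P) x y.
Proof. by rewrite /ip trmx_mul !mulmxA. Qed.

Lemma ip_skewP n (G M : 'M[R]_n) :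
  (forall x y, ip G (M *m x) y = - ip G x (M *m y)) <-> M^T *m G = - (G *m M).
Proof.
have ipE x y : ip G (M *m x) y = ip (M^T *m G) x y by rewrite /ip trmx_mul !mulmxA.
have ipNE x y : - ip G x (M *m y) = ip (- (G *m M)) x y.
  by rewrite /ip mulmxN mulNmx [RHS]mxE !mulmxA.
split=> [skewM | skewM x y]; last by rewrite ipE ipNE skewM.
by apply: eq_ip_mx => x y; rewrite -ipE -ipNE.
Qed.

Lemma ip_tens n1 n2 (A : 'M[R]_n1) (B : 'M[R]_n2) (x y : 'cV_n1) (u v : 'cV_n2) :
  ip (A *t B) (x *t u) (y *t v) = ip A x y * ip B u v.
Proof.
have trE : (x *t u : 'cV_(n1 * n2))^T = x^T *t u^T by apply/matrixP=> i j; rewrite !mxE.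
rewrite /ip trE (tensmx_mul x^T u^T A B) (tensmx_mul (x^T *m A) (u^T *m B) y v) [LHS]mxE.
by case: (mxtens_unindex _) => i j; rewrite [i]ord1 [j]ord1.
Qed.

End InnerProduct.

Section PositiveDefinite.
Variable R : realFieldType.

Definition posdef {n} (G : 'M[R]_n) := forall x, x != 0 -> 0 < ip G x x.

Definition posdiag {n} (D : 'M[R]_n) := is_diag_mx D /\ forall i, 0 < D i i.

Lemma posdef_diag_gt0 n (G : 'M[R]_n) i : posdef G -> 0 < G i i.
Proof.
move=> posG; rewrite -ip_delta posG //.
by apply/negP => /eqP/matrixP/(_ i 0); rewrite !mxE !eqxx => /eqP; rewrite oner_eq0.
Qed.

Lemma posdiag_posdef n (D : 'M[R]_n) : posdiag D -> posdef D.
Proof.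
move=> [/is_diag_mxP diagD posD] x x_neq0.
have ipE : ip D x x = \sum_i D i i * x i 0 ^+ 2.
  rewrite /ip mxE; apply: eq_bigr => i _; rewrite mxE (bigD1 i) //= big1 ?addr0.
    by rewrite mxE [_ * D i i]mulrC -mulrA expr2.
  by move=> j ji; rewrite diagD ?mulr0.
have [i xi_neq0] : exists i, x i 0 != 0.
  apply/existsP; apply: contraNT x_neq0 => /existsPn x0.
  by apply/eqP/matrixP => i j; rewrite ord1 mxE; apply/eqP/negPn.
rewrite ipE (bigD1 i) //= ltr_pwDl 1?mulr_gt0 ?exprn_even_gt0 ?xi_neq0 ?orbT //.
by apply: sumr_ge0 => j _; apply: mulr_ge0; [exact: ltW | exact: sqr_ge0].
Qed.

Lemma posdef_congr n (G P : 'M[R]_n) :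
  P \in unitmx -> posdef G -> posdef (P^T *m G *m P).
Proof.
move=> unitP posG x x_neq0; rewrite -ip_mulmx posG //.
by apply: contra x_neq0 => /eqP/(congr1 (mulmx (invmx P))); rewrite mulKmx // mulmx0 => ->.
Qed.

Lemma posdef_drsub n (a : R) (S : 'M[R]_n) :
  posdef (block_mx a%:M 0 0 S : 'M_(1 + n)) -> posdef S.
Proof.
move=> posB y y_neq0; have := posB (col_mx 0 y).
rewrite col_mx_eq0 negb_and y_neq0 orbT /ip tr_col_mx trmx0 mul_row_block.
by rewrite !(mul0mx, mulmx0, add0r) mul_row_col mulmx0 add0r => ->.
Qed.

Lemma posdiag_block n (a : R) (D : 'M[R]_n) :
  0 < a -> posdiag D -> posdiag (block_mx a%:M 0 0 D : 'M_(1 + n)).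
Proof.
move=> a_gt0 [diagD posD]; split.
  by rewrite is_diag_block_mx // !eqxx mx11_is_diag.
by move=> i; case: (split_ordP i) => k ->; rewrite ?block_mxEul ?block_mxEdr // mxE eqxx.
Qed.

Lemma schur_congr n (a : R) (b : 'cV[R]_n) (C : 'M[R]_n) : a != 0 ->
  let E := block_mx 1%:M (- a^-1 *: b^T) 0 1%:M in
  E^T *m block_mx a%:M b^T b C *m E
    = block_mx a%:M 0 0 (C - a^-1 *: (b *m b^T)) :> 'M_(1 + n).
Proof.
move=> a_neq0 E; rewrite /E tr_block_mx !trmx1 trmx0 !mulmx_block.
rewrite !mul1mx !mul0mx !mulmx0 !mulmx1 !addr0.
have -> : (- a^-1 *: b^T)^T = - a^-1 *: b by rewrite linearZ /= trmxK.
rewrite mul_mx_scalar mul_scalar_mx !scalerA mulrN mulfV // !scaleN1r !addNr.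
by rewrite mul0mx add0r -scalemxAl scaleNr addrC.
Qed.

Lemma posdef_diagonalize n (G : 'M[R]_n) : G^T = G -> posdef G ->
  exists2 P, P \in unitmx & posdiag (P^T *m G *m P).
Proof.
elim: n G => [|n IH].
  by exists 1%:M; [exact: unitmx1 | split; [apply/is_diag_mxP | ]; case].
rewrite -[n.+1]/(1 + n)%N => G1 symG posG.
set a := ulsubmx G1 0 0; set b := dlsubmx G1; set C := drsubmx G1.
have G1E : G1 = block_mx a%:M b^T b C.
  by rewrite -(mx11_scalar (ulsubmx G1)) /b trmx_dlsub symG submxK.
have a_gt0 : 0 < a by rewrite /a !mxE; exact: posdef_diag_gt0.
(* Clear the first row and column by a congruence; recurse on the Schur complement. *)
pose S := C - a^-1 *: (b *m b^T).
pose E : 'M[R]_(1 + n) := block_mx 1%:M (- a^-1 *: b^T) 0 1%:M.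
have unitE : E \in unitmx by rewrite unitmxE det_ublock !det1 mulr1 unitr1.
have EGE : E^T *m G1 *m E = block_mx a%:M 0 0 S by rewrite G1E schur_congr ?gt_eqF.
have symS : S^T = S by rewrite /S linearB /= linearZ /= trmx_mul trmxK trmx_drsub symG.
have posS : posdef S by apply: (@posdef_drsub _ a); rewrite -EGE; exact: posdef_congr.
have [Q unitQ diagQ] := IH S symS posS.
exists (E *m block_mx 1%:M 0 0 Q).
  by rewrite unitmx_mul unitE unitmxE det_ublock det1 mul1r -unitmxE.
have -> : (E *m block_mx 1%:M 0 0 Q)^T *m G1 *m (E *m block_mx 1%:M 0 0 Q)
    = block_mx a%:M 0 0 (Q^T *m S *m Q).
  rewrite trmx_mul !mulmxA -(mulmxA _ E^T) -(mulmxA _ (E^T *m G1)) EGE.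
  rewrite tr_block_mx !trmx1 !trmx0 !mulmx_block.
  by rewrite !mul1mx !mul0mx !mulmx0 !mulmx1 !addr0 !add0r (mul0mx _ Q).
exact: posdiag_block.
Qed.

Lemma posdiag_tens n1 n2 (D1 : 'M[R]_n1) (D2 : 'M[R]_n2) :
  posdiag D1 -> posdiag D2 -> posdiag (D1 *t D2).
Proof.
move=> [/is_diag_mxP diag1 pos1] [/is_diag_mxP diag2 pos2]; split.
  apply/is_diag_mxP => i j.
  case: (mxtens_indexP i) => i1 i2; case: (mxtens_indexP j) => j1 j2.
  move=> ij; rewrite tensmxE.
  have [eq1|/diag1 ->] := eqVneq i1 j1; last by rewrite mul0r.
  have [eq2|/diag2 ->] := eqVneq i2 j2; last by rewrite mulr0.
  by rewrite eq1 eq2 eqxx in ij.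
move=> i; case: (mxtens_indexP i) => i1 i2.
by rewrite tensmxE mulr_gt0.
Qed.

Lemma posdef_tens n1 n2 (A : 'M[R]_n1) (B : 'M[R]_n2) :
  A^T = A -> posdef A -> B^T = B -> posdef B -> posdef (A *t B).
Proof.
move=> symA /(posdef_diagonalize symA)[P unitP diagP].
move=> symB /(posdef_diagonalize symB)[Q unitQ diagQ] x x_neq0.
pose y := (invmx P *t invmx Q) *m x.
have xE : x = (P *t Q) *m y by rewrite /y mulmxA tensmx_mul !mulmxV // tensmx11 mul1mx.
have y_neq0 : y != 0 by apply: contra x_neq0 => /eqP y0; rewrite xE y0 mulmx0.
rewrite xE ip_mulmx trmx_tens !tensmx_mul.
exact/posdiag_posdef/y_neq0/posdiag_tens.
Qed.

End PositiveDefinite.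

(* 'M_n is a ring only for n of the form n'.+1; matrix products over any n need this law. *)
HB.instance Definition _ (R : pzRingType) (n : nat) :=
  Monoid.isLaw.Build 'M[R]_n 1%:M (@mulmx R n n n)
    (@mulmxA R n n n n) (@mul1mx R n n) (@mulmx1 R n n).

Section CliffordGenerators.
Variables (R : comPzRingType) (n m : nat) (e : nat -> 'M[R]_n).
Hypothesis e_sq : forall i, (i < m)%N -> e i *m e i = - 1%:M.
Hypothesis e_anti : forall i j, (i < m)%N -> (j < m)%N -> i != j ->
  e i *m e j = - (e j *m e i).

Definition eprod k := \big[mulmx/1%:M]_(0 <= i < k) e i.

Lemma eprod0 : eprod 0 = 1%:M.
Proof. by rewrite /eprod big_geq. Qed.

Lemma eprodS k : eprod k.+1 = eprod k *m e k.
Proof. by rewrite /eprod big_nat_recr. Qed.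

Lemma e_eprodC j k : (j < m)%N -> (k <= m)%N ->
  e j *m eprod k = (-1) ^+ (k + (j < k)) *: (eprod k *m e j).
Proof.
move=> jm; elim: k => [|k IH] km.
  by rewrite eprod0 mul1mx mulmx1 ltn0 addn0 expr0 scale1r.
rewrite eprodS mulmxA IH; last exact: ltnW.
rewrite -scalemxAl -!mulmxA.
have [->|jk] := eqVneq j k; first by rewrite ltnn ltnSn addn0 addn1 !exprS !mulN1r opprK.
rewrite e_anti // mulmxN scalerN -scaleNr [(j < k.+1)%N]ltnS [(j <= k)%N]leq_eqVlt.
by rewrite (negbTE jk) addSn exprS mulN1r.
Qed.

Lemma eprod_sq k : (k <= m)%N -> eprod k *m eprod k = (-1) ^+ 'C(k.+1, 2) *: 1%:M.
Proof.
elim: k => [|k IH] km; first by rewrite eprod0 mulmx1 scale1r.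
have km' : (k <= m)%N := ltnW km.
rewrite eprodS mulmxA -(mulmxA (eprod k)) e_eprodC // ltnn addn0 -scalemxAr -scalemxAl.
rewrite !mulmxA -(mulmxA _ (e k)) e_sq // IH // -scalemxAl mulmxN mulmx1 scalerA.
rewrite scalerN -scaleNr -exprD -[- _]mulN1r -exprS; congr (_ ^+ _ *: _).
by rewrite [in RHS]binS bin1 addnS addnC.
Qed.

Variable G : 'M[R]_n.
Hypothesis e_skew : forall i, (i < m)%N -> (e i)^T *m G = - (G *m e i).

Lemma eprod_adj k : (k <= m)%N ->
  (eprod k)^T *m G = (-1) ^+ 'C(k.+1, 2) *: (G *m eprod k).
Proof.
elim: k => [|k IH] km; first by rewrite eprod0 trmx1 mul1mx mulmx1 scale1r.
have km' : (k <= m)%N := ltnW km.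
rewrite eprodS trmx_mul -mulmxA IH // -scalemxAr (mulmxA (e k)^T) e_skew // mulNmx.
rewrite -mulmxA e_eprodC // ltnn addn0 -scalemxAr mulmxA scalerN -scaleNr scalerA.
rewrite mulNr -exprD -[- _]mulN1r -exprS; congr (_ ^+ _ *: _).
by rewrite [in RHS]binS bin1 addnS.
Qed.

End CliffordGenerators.

Lemma odd_bin2S_mod4 m : (m %% 4 = 0)%N -> odd 'C(m.+1, 2) = false.
Proof. by move=> m4; apply/negbTE; rewrite bin2 /=; lia. Qed.

Section CliffordModule.
Variables (R : realFieldType) (m n : nat) (G : 'M[R]_n) (J : 'rV[R]_m -> 'M[R]_n).
Hypothesis J_linear : forall (a : R) z w, J (a *: z + w) = a *: J z + J w.
Hypothesis J_sq : forall z, J z *m J z = - stdip z z *: 1%:M.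
Hypothesis J_skew : forall z x y, ip G (J z *m x) y = - ip G x (J z *m y).

HB.instance Definition _ := GRing.isLinear.Build R 'rV[R]_m 'M[R]_n *:%R J J_linear.

Lemma J_anticomm z w :
  J z *m J w + J w *m J z = - (stdip z w + stdip w z) *: 1%:M.
Proof.
have := J_sq (z + w); rewrite linearD /= mulmxDl !mulmxDr !J_sq.
have -> : stdip (z + w) (z + w) = stdip z z + stdip w w + (stdip z w + stdip w z).
  by rewrite /stdip linearD /= mulmxDl !mulmxDr !mxE; ring.
move=> sq_zw; apply: (@addrI _ (- stdip z z *: 1%:M + - stdip w w *: 1%:M)).
by rewrite addrACA [- stdip w w *: _ + _]addrC sq_zw -!scalerDl; congr (_ *: _); ring.
Qed.

(* Indexed by nat to fit eprod; Jbasis i = J 0 for i >= m. *)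
Definition Jbasis (i : nat) := J (\row_(j < m) (j == i :> nat)%:R).

Lemma Jbasis_ord (i : 'I_m) : Jbasis i = J (delta_mx 0 i).
Proof. by congr J; apply/rowP => k; rewrite !mxE. Qed.

Lemma stdip_delta (i j : 'I_m) :
  stdip (delta_mx 0 i : 'rV[R]_m) (delta_mx 0 j) = (i == j)%:R.
Proof. by rewrite /stdip trmx_delta mul_delta_mx_cond; case: eqP; rewrite !mxE ?eqxx. Qed.

Lemma Jbasis_sq i : (i < m)%N -> Jbasis i *m Jbasis i = - 1%:M.
Proof.
move=> im; rewrite -[i]/(val (Ordinal im)) Jbasis_ord J_sq stdip_delta.
by rewrite eqxx scaleN1r.
Qed.

Lemma Jbasis_anti i j : (i < m)%N -> (j < m)%N -> i != j ->
  Jbasis i *m Jbasis j = - (Jbasis j *m Jbasis i).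
Proof.
move=> im jm ij; apply/eqP; rewrite -addr_eq0.
rewrite -[i]/(val (Ordinal im)) -[j]/(val (Ordinal jm)) !Jbasis_ord J_anticomm.
rewrite !stdip_delta [Ordinal jm == _]eq_sym (negbTE (ij : Ordinal im != Ordinal jm)).
by rewrite addr0 oppr0 scale0r.
Qed.

Lemma Jbasis_skew i : (Jbasis i)^T *m G = - (G *m Jbasis i).
Proof. exact/ip_skewP/J_skew. Qed.

Lemma Kprod_eprod : Kprod J = eprod Jbasis m.
Proof. by rewrite /eprod big_mkord; apply: eq_bigr => i _; rewrite Jbasis_ord. Qed.

Lemma Kprod_sq : (m %% 4 = 0)%N -> Kprod J *m Kprod J = 1%:M.
Proof.
move=> m4; rewrite Kprod_eprod (eprod_sq Jbasis_sq Jbasis_anti (leqnn m)).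
by rewrite -signr_odd odd_bin2S_mod4 // scale1r.
Qed.

Lemma Kprod_adj : (m %% 4 = 0)%N -> (Kprod J)^T *m G = G *m Kprod J.
Proof.
move=> m4; rewrite Kprod_eprod.
rewrite (eprod_adj Jbasis_anti (fun i _ => Jbasis_skew i) (leqnn m)).
by rewrite -signr_odd odd_bin2S_mod4 // scale1r.
Qed.

Lemma J_KprodC z : ~~ odd m -> J z *m Kprod J = - (Kprod J *m J z).
Proof.
move=> m_even; rewrite (row_sum_delta z) linear_sum mulmx_suml mulmx_sumr -sumrN.
apply: eq_bigr => j _; rewrite linearZ /= -scalemxAl -scalemxAr -scalerN; congr (_ *: _).
rewrite -Jbasis_ord Kprod_eprod (e_eprodC Jbasis_anti (ltn_ord j) (leqnn m)) ltn_ord.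
by rewrite addn1 -signr_odd /= m_even expr1 scaleN1r.
Qed.

End CliffordModule.

Section TensorModule.
Variables (R : realFieldType) (m r nm nr : nat).
Variables (Gm : 'M[R]_nm) (Jm : 'rV[R]_m -> 'M[R]_nm).
Variables (Gr : 'M[R]_nr) (Jr : 'rV[R]_r -> 'M[R]_nr).
Local Notation K := (Kprod Jm).
Local Notation J := (tens_action Jm Jr).

Hypothesis Jm_linear : forall (a : R) z w, Jm (a *: z + w) = a *: Jm z + Jm w.
Hypothesis Jr_linear : forall (a : R) z w, Jr (a *: z + w) = a *: Jr z + Jr w.

HB.instance Definition _ := GRing.isLinear.Build R 'rV[R]_m 'M[R]_nm *:%R Jm Jm_linear.
HB.instance Definition _ := GRing.isLinear.Build R 'rV[R]_r 'M[R]_nr *:%R Jr Jr_linear.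

Lemma bracket_tens (x y : 'cV[R]_nm) (u v : 'cV[R]_nr) :
  bracket (Gm *t Gr) J (x *t u) (y *t v)
  = row_mx (ip Gr u v *: bracket Gm Jm x y) (ip Gm (K *m x) y *: bracket Gr Jr u v).
Proof.
apply/rowP => i; rewrite mxE /tens_action.
case: (split_ordP i) => k ->; rewrite ?row_mxEl ?row_mxEr !mxE.
  rewrite delta_mx_lshift row_mxKl row_mxKr linear0 tensmx0 addr0.
  by rewrite (tensmx_mul _ _ x u) mul1mx ip_tens mulrC.
rewrite delta_mx_rshift row_mxKl row_mxKr linear0 tens0mx add0r.
by rewrite (tensmx_mul _ _ x u) ip_tens.
Qed.

Lemma tens_inner_product :
  is_inner_product Gm -> is_inner_product Gr -> is_inner_product (Gm *t Gr).
Proof.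
move=> [symGm posGm] [symGr posGr]; split; first by rewrite trmx_tens symGm symGr.
exact: posdef_tens.
Qed.

Lemma tens_action_linear (a : R) zw zw' : J (a *: zw + zw') = a *: J zw + J zw'.
Proof.
rewrite /tens_action !linearP.
by rewrite tensmxDl tensmxZl tensmxDr tensmxZr scalerDr addrACA.
Qed.

Hypothesis Jm_sq : forall z, Jm z *m Jm z = - stdip z z *: 1%:M.
Hypothesis Jr_sq : forall w, Jr w *m Jr w = - stdip w w *: 1%:M.
Hypothesis K_sq : K *m K = 1%:M.
Hypothesis Jm_KC : forall z, Jm z *m K = - (K *m Jm z).

Lemma stdip_hsub (zw : 'rV[R]_(m + r)) :
  stdip zw zw = stdip (lsubmx zw) (lsubmx zw) + stdip (rsubmx zw) (rsubmx zw).
Proof. by rewrite /stdip -{1 2}[zw]hsubmxK tr_row_mx mul_row_col mxE. Qed.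

Lemma tens_action_sq zw : J zw *m J zw = - stdip zw zw *: 1%:M.
Proof.
rewrite /tens_action stdip_hsub; set z := lsubmx zw; set w := rsubmx zw.
rewrite mulmxDl !mulmxDr !tensmx_mul !mul1mx !mulmx1 Jm_sq Jr_sq K_sq.
rewrite Jm_KC tensmxNl addrA addrNK tensmxZl tensmxZr tensmx11.
by rewrite -scalerDl opprD.
Qed.

Hypothesis Jm_skew : forall z, (Jm z)^T *m Gm = - (Gm *m Jm z).
Hypothesis Jr_skew : forall w, (Jr w)^T *m Gr = - (Gr *m Jr w).
Hypothesis K_adj : K^T *m Gm = Gm *m K.

Lemma tens_action_skew zw : (J zw)^T *m (Gm *t Gr) = - ((Gm *t Gr) *m J zw).
Proof.
rewrite /tens_action linearD /= !trmx_tens trmx1 mulmxDl mulmxDr !tensmx_mul.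
by rewrite mul1mx mulmx1 Jm_skew Jr_skew K_adj tensmxNl tensmxNr opprD.
Qed.

End TensorModule.

Theorem proposition4p3 (R : realFieldType) (m r nm nr : nat)
    (Gm : 'M[R]_nm) (Jm : 'rV[R]_m -> 'M[R]_nm)
    (Gr : 'M[R]_nr) (Jr : 'rV[R]_r -> 'M[R]_nr) :
  (m %% 4 = 0)%N ->
  is_Cmodule Gm Jm ->
  is_Cmodule Gr Jr ->
  is_Cmodule (Gm *t Gr) (tens_action Jm Jr) /\
  (forall (x y : 'cV[R]_nm) (u v : 'cV[R]_nr),
     bracket (Gm *t Gr) (tens_action Jm Jr) (x *t u) (y *t v)
     = row_mx (ip Gr u v *: bracket Gm Jm x y)
              (ip Gm (Kprod Jm *m x) y *: bracket Gr Jr u v)).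
Proof.
move=> m4 [ipGm Jm_lin Jm_sq Jm_skew] [ipGr Jr_lin Jr_sq Jr_skew].
have m_even : ~~ odd m by lia.
split; last exact: bracket_tens.
split.
- exact: tens_inner_product.
- exact: tens_action_linear.
- apply: tens_action_sq => //; first exact: Kprod_sq.
  by move=> z; apply: J_KprodC.
- move=> zw; apply/ip_skewP; apply: tens_action_skew => //.
  + by move=> z; apply/ip_skewP.
  + by move=> w; apply/ip_skewP.
  + exact: Kprod_adj.
Qed.
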